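(* Let $(\alpha,\beta)\in Q$ and let $x^*=\lim_kx_k$ for the GAFS sequence. There exists $L_2\ge1$ such that for all $k\ge L_2$, $$\frac{\gamma_k}{c^Tx_k-c^Tx^*}<L_2.$$
   Context: Let $A\in\mathbb{R}^{m\times n}$ have rank $m$, $b\in\mathbb{R}^m$, $c\in\mathbb{R}^n$. Primal LP: $\min c^Tx$ s.t. $Ax=b$, $x\ge 0$. Standing assumptions: the primal has a strictly positive feasible point; $c^Tx$ is not constant on the primal feasible region; the LP has an optimal solution. For $u\in\mathbb{R}^n$, $\gamma(u)=\max\{u_i: u_i>0\}$. For $x>0$, $X=\mathrm{diag}(x)$. GAFS sequence: fix $\alpha\in(0,1)$, $\beta\in[0,1)$, and $x_0>0$ with $Ax_0=b$. For $k\ge0$ let $X_k=\mathrm{diag}(x_k)$, $y_k=(AX_k^2A^T)^{-1}AX_k^2c$, $s_k=c-A^Ty_k$. Set $x_1=x_0-\alpha\frac{X_0^2s_0}{\gamma(X_0s_0)}$ and, for $k\ge1$, $x_{k+1}=x_k-\alpha\frac{X_k^2s_k}{\gamma(X_ks_k)}+\beta\frac{x_k-x_{k-1}}{\|X_k^{-1}(x_k-x_{k-1})\|_\infty}$ (all quantities assumed well defined). Write $\beta_k=\beta/\|X_k^{-1}(x_k-x_{k-1})\|_\infty$ ($k\ge1$), $\gamma_k=\prod_{j=1}^k\beta_j$. $Q=\{(\alpha,\beta): 0<\alpha<1,\ 0\le\beta<1/\phi,\ \alpha+\beta\le 2/3\}$ with $\phi=(1+\sqrt5)/2$. *)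

(* R is an arbitrary real closed field (covers the reals). *)
From HB Require Import structures.
From mathcomp Require Import all_boot all_order all_algebra.
Set Implicit Arguments. Unset Strict Implicit. Unset Printing Implicit Defensive.
Import Order.TTheory GRing.Theory Num.Theory.
Local Open Scope ring_scope.

Section Defs.
Variable R : rcfType.

Definition dotv n (u v : 'cV[R]_n) : R := (u^T *m v) 0 0.

(* gamma(u) = max {u_i : u_i > 0}; equals that max whenever some u_i > 0 *)
Definition gammaf n (u : 'cV[R]_n) : R := \big[Num.max/0]_(i < n) u i 0.

Definition ninf n (u : 'cV[R]_n) : R := \big[Num.max/0]_(i < n) `|u i 0|.

Definition Xdiag n (x : 'cV[R]_n) : 'M[R]_n := diag_mx x^T.

Definition posv n (x : 'cV[R]_n) : Prop := forall i, 0 < x i 0.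
Definition nnegv n (x : 'cV[R]_n) : Prop := forall i, 0 <= x i 0.

Definition feasible m n (A : 'M[R]_(m, n)) (b : 'cV[R]_m) (x : 'cV[R]_n) : Prop :=
  A *m x = b /\ nnegv x.

Definition ydual m n (A : 'M[R]_(m, n)) (c : 'cV[R]_n) (x : 'cV[R]_n) : 'cV[R]_m :=
  let X := Xdiag x in
  invmx (A *m X *m X *m A^T) *m (A *m X *m X *m c).
Definition sdual m n (A : 'M[R]_(m, n)) (c : 'cV[R]_n) (x : 'cV[R]_n) : 'cV[R]_n :=
  c - A^T *m ydual A c x.

Definition afsdir m n (A : 'M[R]_(m, n)) (c : 'cV[R]_n) (x : 'cV[R]_n) : 'cV[R]_n :=
  let X := Xdiag x in
  (gammaf (X *m sdual A c x))^-1 *: (X *m X *m sdual A c x).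

Definition momnorm n (xk xk1 : 'cV[R]_n) : R := ninf (invmx (Xdiag xk) *m (xk - xk1)).

Definition betak n (beta : R) (x : nat -> 'cV[R]_n) (k : nat) : R :=
  beta / momnorm (x k) (x k.-1).

Definition gammak n (beta : R) (x : nat -> 'cV[R]_n) (k : nat) : R :=
  \prod_(1 <= j < k.+1) betak beta x j.

Definition golden : R := (1 + Num.sqrt 5) / 2.

Definition inQ (alpha beta : R) : Prop :=
  0 < alpha /\ alpha < 1 /\ 0 <= beta /\ beta < golden^-1 /\ alpha + beta <= 2 / 3.

Definition conv n (x : nat -> 'cV[R]_n) (xs : 'cV[R]_n) : Prop :=
  forall e : R, 0 < e -> exists N : nat, forall k, (N <= k)%N -> ninf (x k - xs) < e.

End Defs.

(** The affine-scaling direction d(x) = X^2 s / gamma(X s) is a strict descent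
    direction: since A X^2 s = 0 and c = s + A^T y, one gets
    c^T X^2 s = |X s|^2 > 0.  Writing D_k = c^T x_k - c^T x_{k+1}, the GAFS
    recursion reads D_k = alpha c^T d(x_k) + beta_k D_{k-1} >= beta_k D_{k-1},
    hence D_k >= gamma_k D_0 = gamma_k alpha c^T d(x_0).  The objective values
    decrease to c^T x^*, so c^T x_k - c^T x^* >= D_k, and the ratio
    gamma_k / (c^T x_k - c^T x^* ) stays below 1 / (alpha c^T d(x_0)) for all k. *)
From HB Require Import structures.
From mathcomp Require Import all_boot all_order all_algebra.
Import Order.TTheory GRing.Theory Num.Theory.
From mathcomp Require Import lra.
Set Implicit Arguments. Unset Strict Implicit. Unset Printing Implicit Defensive.
Local Open Scope ring_scope.

Section RealSequences.
Variable R : realFieldType.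

Lemma nonincreasing_ge_lim (f : nat -> R) (l : R) :
  (forall k, f k.+1 <= f k) ->
  (forall e : R, 0 < e -> exists N, forall k, (N <= k)%N -> `|f k - l| < e) ->
  forall k, l <= f k.
Proof.
move=> f_dec f_cvg k; rewrite leNgt; apply/negP => fk_lt_l.
have [N fN] : exists N, forall j, (N <= j)%N -> `|f j - l| < l - f k.
  by apply: f_cvg; rewrite subr_gt0.
have := fN _ (leq_maxl N k); rewrite ltr_norml => /andP [+ _].
have := Order.NatMonotonyTheory.nonincnP f_dec _ _ (leq_maxr N k); lra.
Qed.

(* Also covers [d = 0], where [g / d] is [0]. *)
Lemma div_le_inv_of_mul_le (g a d : R) :
  0 < a -> 0 <= g -> g * a <= d -> g / d <= a^-1.
Proof.
move=> a_gt0 g_ge0 ga_le_d.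
have [->|d_neq0] := eqVneq d 0; first by rewrite invr0 mulr0 invr_ge0 ltW.
have d_gt0 : 0 < d.
  by rewrite lt0r d_neq0 (le_trans _ ga_le_d) // mulr_ge0 // ltW.
by rewrite ler_pdivrMr // -(ler_pM2l a_gt0) mulrA mulfV ?gt_eqF // mul1r mulrC.
Qed.

Section MomentumDescent.
Variables (f a bk : nat -> R).
Hypothesis a_ge0 : forall k, 0 <= a k.
Hypothesis bk_ge0 : forall k, 0 <= bk k.
Hypothesis f1 : f 1%N = f 0%N - a 0%N.
Hypothesis fS : forall k, (1 <= k)%N -> f k.+1 = f k - a k + bk k * (f k - f k.-1).

Lemma momentum_descent_ge k :
  (\prod_(1 <= j < k.+1) bk j) * a 0%N <= f k - f k.+1.
Proof.
elim: k => [|k IH]; first by rewrite big_geq // mul1r f1; lra.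
rewrite big_nat_recr //= (fS (k := k.+1)) //= mulrAC mulrC.
have := ler_wpM2l (bk_ge0 k.+1) IH; have := a_ge0 k.+1; lra.
Qed.

Lemma momentum_descent_nonincreasing k : f k.+1 <= f k.
Proof.
have := momentum_descent_ge k.
have : 0 <= (\prod_(1 <= j < k.+1) bk j) * a 0%N.
  by rewrite mulr_ge0 // prodr_ge0.
lra.
Qed.

End MomentumDescent.
End RealSequences.

Section SquareSums.
Variable R : realDomainType.

Lemma trmx_mul_self_sum n (u : 'cV[R]_n) : (u^T *m u) 0 0 = \sum_i u i 0 ^+ 2.
Proof. by rewrite mxE; apply: eq_bigr => i _; rewrite mxE expr2. Qed.

Lemma trmx_mul_self_eq0 n (u : 'cV[R]_n) : (u^T *m u) 0 0 = 0 -> u = 0.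
Proof.
rewrite trmx_mul_self_sum => sum0; apply/matrixP => i j; rewrite (ord1 j) mxE.
have ui2_0 : u i 0 ^+ 2 = 0.
  by apply: (psumr_eq0P _ sum0) => // k _; apply: sqr_ge0.
by move/eqP: ui2_0; rewrite sqrf_eq0 => /eqP.
Qed.

Lemma trmx_mul_self_gt0 n (u : 'cV[R]_n) i : u i 0 != 0 -> 0 < (u^T *m u) 0 0.
Proof.
move=> ui_neq0; rewrite trmx_mul_self_sum (bigD1 i) //=.
apply: (lt_le_trans (_ : 0 < u i 0 ^+ 2)); first by rewrite exprn_even_gt0.
by rewrite lerDl sumr_ge0 // => j _; apply: sqr_ge0.
Qed.

End SquareSums.

Section AffineScaling.
Variable R : rcfType.

Lemma dotvD n (c u v : 'cV[R]_n) : dotv c (u + v) = dotv c u + dotv c v.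
Proof. by rewrite /dotv mulmxDr !mxE. Qed.

Lemma dotvB n (c u v : 'cV[R]_n) : dotv c (u - v) = dotv c u - dotv c v.
Proof. by rewrite /dotv mulmxBr !mxE. Qed.

Lemma dotvZ n (c u : 'cV[R]_n) a : dotv c (a *: u) = a * dotv c u.
Proof. by rewrite /dotv -scalemxAr mxE. Qed.

Lemma norm_dotv_le n (c u : 'cV[R]_n) :
  `|dotv c u| <= (\sum_i `|c i 0|) * ninf u.
Proof.
rewrite /dotv mxE mulr_suml; apply: (le_trans (ler_norm_sum _ _ _)).
apply: ler_sum => i _; rewrite mxE normrM ler_wpM2l //.
exact: (le_bigmax _ (fun i => `|u i 0|)).
Qed.

Lemma conv_dotv n (c : 'cV[R]_n) (x : nat -> 'cV[R]_n) (xs : 'cV[R]_n) :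
  conv x xs -> forall e : R, 0 < e ->
  exists N, forall k, (N <= k)%N -> `|dotv c (x k) - dotv c xs| < e.
Proof.
move=> x_cvg e e_gt0; set S := \sum_i `|c i 0|.
have S_gt0 : 0 < S + 1 by rewrite ltr_wpDl ?sumr_ge0.
have [N xN] := x_cvg (e / (S + 1)) (divr_gt0 e_gt0 S_gt0).
exists N => k /xN; rewrite ltr_pdivlMr // => dist_lt.
rewrite -dotvB; apply: le_lt_trans (norm_dotv_le c (x k - xs)) _.
apply: le_lt_trans dist_lt; rewrite mulrC ler_wpM2l ?lerDl //.
exact: bigmax_ge_id.
Qed.

Section Direction.
Variables (m n : nat) (A : 'M[R]_(m, n)) (c x : 'cV[R]_n).
Hypothesis A_row_free : row_free A.
Hypothesis x_neq0 : forall i, x i 0 != 0.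
Let X := Xdiag x.

Lemma Xdiag_tr : X^T = X.
Proof. exact: tr_diag_mx. Qed.

Lemma Xdiag_unit : X \in unitmx.
Proof.
rewrite unitmxE det_diag unitfE; apply/prodf_neq0 => i _.
by rewrite mxE x_neq0.
Qed.

Lemma weighted_gram_unit : A *m X *m X *m A^T \in unitmx.
Proof.
rewrite -row_free_unit; apply: inj_row_free => v vM0.
pose w := v *m A *m X.
have w0 : w = 0.
  apply: trmx_inj; rewrite trmx0; apply: trmx_mul_self_eq0.
  have -> : w^T^T *m w^T = v *m (A *m X *m X *m A^T) *m v^T.
    by rewrite trmxK /w !trmx_mul Xdiag_tr !mulmxA.
  by rewrite vM0 mul0mx mxE.
apply: (row_free_inj A_row_free); rewrite mul0mx.
by rewrite -(mulmxK Xdiag_unit (v *m A)) -/w w0 mul0mx.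
Qed.

Lemma weighted_sdual_ker : A *m (X *m X *m sdual A c x) = 0.
Proof.
have gram_cancel : forall v : 'cV[R]_m,
    A *m X *m X *m A^T *m (invmx (A *m X *m X *m A^T) *m v) = v.
  by move=> v; rewrite mulKVmx // weighted_gram_unit.
apply/eqP; rewrite /sdual /ydual -/X !mulmxBr subr_eq0 !mulmxA.
by rewrite -{1}[A *m X *m X *m c]gram_cancel !mulmxA.
Qed.

Lemma dotv_weighted_sdual :
  dotv c (X *m X *m sdual A c x) = ((X *m sdual A c x)^T *m (X *m sdual A c x)) 0 0.
Proof.
set s := sdual A c x.
have -> : c = s + A^T *m ydual A c x by rewrite /s /sdual subrK.
rewrite /dotv raddfD /= mulmxDl trmx_mul trmxK -[_ *m A *m _]mulmxA weighted_sdual_ker.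
by rewrite mulmx0 addr0 trmx_mul Xdiag_tr !mulmxA.
Qed.

Lemma dotv_afsdir_gt0 :
  (exists i, 0 < (X *m sdual A c x) i 0) -> 0 < dotv c (afsdir A c x).
Proof.
move=> [i Xs_gt0]; rewrite /afsdir -/X dotvZ dotv_weighted_sdual.
have gamma_gt0 : 0 < gammaf (X *m sdual A c x).
  exact: lt_le_trans Xs_gt0 (le_bigmax _ (fun i => (X *m sdual A c x) i 0) i).
by rewrite mulr_gt0 ?invr_gt0 // (trmx_mul_self_gt0 (i := i)) ?gt_eqF.
Qed.

End Direction.
End AffineScaling.

Theorem lemma7 (R : rcfType) (m n : nat)
  (A : 'M[R]_(m, n)) (b : 'cV[R]_m) (c : 'cV[R]_n)
  (hrank : \rank A = m)
  (hint : exists x0 : 'cV[R]_n, A *m x0 = b /\ posv x0)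
  (hnc : exists x1 x2 : 'cV[R]_n,
      feasible A b x1 /\ feasible A b x2 /\ dotv c x1 <> dotv c x2)
  (hopt : exists xo : 'cV[R]_n,
      feasible A b xo /\ forall z, feasible A b z -> dotv c xo <= dotv c z)
  (alpha beta : R) (hQ : inQ alpha beta)
  (x : nat -> 'cV[R]_n)
  (hx0 : A *m x 0%N = b /\ posv (x 0%N))
  (hwd_x : forall k i, x k i 0 != 0)
  (hwd_g : forall k, exists i, 0 < (Xdiag (x k) *m sdual A c (x k)) i 0)
  (hwd_n : forall k, (1 <= k)%N -> momnorm (x k) (x k.-1) != 0)
  (hx1 : x 1%N = x 0%N - alpha *: afsdir A c (x 0%N))
  (hxS : forall k, (1 <= k)%N ->
      x k.+1 = x k - alpha *: afsdir A c (x k)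
               + (beta / momnorm (x k) (x k.-1)) *: (x k - x k.-1))
  (xs : 'cV[R]_n) (hlim : conv x xs) :
  exists L2 : R, 1 <= L2 /\
    forall k : nat, L2 <= k%:R ->
      gammak beta x k / (dotv c (x k) - dotv c xs) < L2.
Proof.
have [alpha_gt0 [_ [beta_ge0 _]]] := hQ.
have A_row_free : row_free A by rewrite /row_free hrank.
pose f k := dotv c (x k).
pose a k := alpha * dotv c (afsdir A c (x k)).
have a_gt0 k : 0 < a k by rewrite mulr_gt0 // dotv_afsdir_gt0.
have a_ge0 k : 0 <= a k by rewrite ltW.
have bk_ge0 k : 0 <= betak beta x k by rewrite divr_ge0 // bigmax_ge_id.
have f1 : f 1%N = f 0%N - a 0%N by rewrite /f hx1 dotvB dotvZ.
have fS k : (1 <= k)%N ->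
    f k.+1 = f k - a k + betak beta x k * (f k - f k.-1).
  by move=> k_ge1; rewrite /f hxS // dotvD dotvB (dotvZ c _ alpha) dotvZ dotvB.
have f_ge_lim k : dotv c xs <= f k.
  exact: nonincreasing_ge_lim (momentum_descent_nonincreasing a_ge0 bk_ge0 f1 fS)
    (conv_dotv c hlim) k.
exists ((a 0%N)^-1 + 1); split=> [|k _]; first by rewrite lerDr invr_ge0.
suff ratio_le : gammak beta x k / (f k - dotv c xs) <= (a 0%N)^-1.
  by rewrite (le_lt_trans ratio_le) // ltrDl.
apply: div_le_inv_of_mul_le => //; first exact: prodr_ge0.
have := momentum_descent_ge a_ge0 bk_ge0 f1 fS k; have := f_ge_lim k.+1.
rewrite /gammak /f; lra.
Qed.
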